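(* Let $k,n\in\mathbb{N}$ with $k\ge 2$, let $\mathbb{F}\subset\mathbb{C}$ be a field, let $P\in\mathbb{F}[x]$ be a polynomial of degree $k$ with leading coefficient $1$, and let $f\colon\mathbb{F}\to\mathbb{C}$ be a generalized monomial of degree $n$. If the mapping $\mathbb{F}\ni x\mapsto f(P(x))$ is a normal polynomial, then the mapping $\mathbb{F}\ni x\mapsto f(x^k)$ is also a normal polynomial.
   Context: A function $A\colon\mathbb{F}^k\to\mathbb{C}$ is $k$-additive if it is additive (with respect to the additive group of $\mathbb{F}$) in each variable. A function $f\colon\mathbb{F}\to\mathbb{C}$ is a generalized monomial of degree $k$ if there is a symmetric $k$-additive $A\colon\mathbb{F}^k\to\mathbb{C}$ with $f(x)=A(x,\ldots,x)$ for all $x\in\mathbb{F}$. A function $p\colon\mathbb{F}\to\mathbb{C}$ is a normal polynomial if there exist $m\in\mathbb{N}$, additive functions $a_1,\ldots,a_m\colon\mathbb{F}\to\mathbb{C}$ and a complex polynomial $Q\in\mathbb{C}[x_1,\ldots,x_m]$ with $p(x)=Q(a_1(x),\ldots,a_m(x))$ for all $x\in\mathbb{F}$. *)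

From HB Require Import structures.
From mathcomp Require Import all_boot all_order all_algebra all_fingroup.
From mathcomp Require Import reals complex mpoly.
Set Implicit Arguments. Unset Strict Implicit. Unset Printing Implicit Defensive.
Import GRing.Theory Num.Theory.
Local Open Scope ring_scope.

Definition additive_fun (F : fieldType) (C : nmodType) (a : F -> C) : Prop :=
  forall x y, a (x + y) = a x + a y.

Definition upd (F : Type) (k : nat) (v : 'I_k -> F) (i : 'I_k) (x : F) : 'I_k -> F :=
  fun j => if j == i then x else v j.

Definition k_additive (F : fieldType) (C : nmodType) (k : nat)
  (A : ('I_k -> F) -> C) : Prop :=
  forall (i : 'I_k) (v : 'I_k -> F) (x y : F),
    A (upd v i (x + y)) = A (upd v i x) + A (upd v i y).

Definition symmetric_form (F : Type) (C : Type) (k : nat)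
  (A : ('I_k -> F) -> C) : Prop :=
  forall (s : {perm 'I_k}) (v : 'I_k -> F), A (fun j => v (s j)) = A v.

Definition generalized_monomial (F : fieldType) (C : nmodType) (k : nat)
  (f : F -> C) : Prop :=
  exists A : ('I_k -> F) -> C,
    [/\ k_additive A, symmetric_form A & forall x, f x = A (fun _ => x)].

Definition normal_polynomial (F : fieldType) (C : comRingType) (p : F -> C) : Prop :=
  exists (m : nat) (a : 'I_m -> F -> C) (Q : {mpoly C[m]}),
    (forall i, additive_fun (a i)) /\
    forall x, p x = Q.@[fun i => a i x].

From HB Require Import structures.
From mathcomp Require Import all_boot all_order all_algebra all_fingroup.
From mathcomp Require Import reals complex mpoly.
From mathcomp Require Import zify.
From Stdlib Require Import FunctionalExtensionality.
Import GRing.Theory Num.Theory.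
Local Open Scope ring_scope.

(* Fix x. Write f y = A (y, ..., y) with A symmetric and additive in each slot.
   Expanding P (r x) = sum_j P_j x^j r^j one slot at a time shows that, for
   natural r, r |-> f (P (r x)) is a polynomial in r of degree at most k n whose
   coefficient of r^(k n) is A (x^k, ..., x^k) = f (x^k), since P is monic.
   On the other hand the a_i are additive, so f (P (r x)) = Q (r a_1 x, ...,
   r a_m x), a polynomial in r whose coefficient of r^d is the degree-d
   homogeneous part of Q at (a_1 x, ..., a_m x).  Complex polynomials agreeing
   on all naturals are equal, so f (x^k) is the degree-(k n) homogeneous part
   of Q evaluated at (a_1 x, ..., a_m x). *)

Section AdditiveFun.
Context {F : fieldType} {C : zmodType} {g : F -> C}.
Hypothesis g_additive : additive_fun g.

Lemma additive_fun0 : g 0 = 0.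
Proof. by apply: (@addrI _ (g 0)); rewrite -g_additive !addr0. Qed.

Lemma additive_fun_sum (I : Type) (r : seq I) (P : pred I) (z : I -> F) :
  g (\sum_(j <- r | P j) z j) = \sum_(j <- r | P j) g (z j).
Proof. exact: (big_morph g g_additive additive_fun0). Qed.

Lemma additive_fun_natmul x r : g (x *+ r) = g x *+ r.
Proof.
by elim: r => [|r IH]; rewrite ?mulr0n ?additive_fun0 // !mulrS g_additive IH.
Qed.

End AdditiveFun.

Lemma k_additive_upd {F : fieldType} {C : nmodType} {n} {A : ('I_n -> F) -> C} :
  k_additive A -> forall i v, additive_fun (fun x => A (upd v i x)).
Proof. by move=> hA i v x y; apply: hA. Qed.

Section FillPrefix.
Context {T : Type} {n : nat}.
Implicit Types (w z : T) (y : 'I_n -> T).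

Definition fill_prefix s w y : 'I_n -> T :=
  fun i => if (i < s)%N then w else y i.

Lemma fill_prefix_full w y : fill_prefix n w y = fun=> w.
Proof. by apply: functional_extensionality => i; rewrite /fill_prefix ltn_ord. Qed.

Lemma fill_prefixS s (lt_sn : (s < n)%N) w y :
  fill_prefix s.+1 w y = upd (fill_prefix s w y) (Ordinal lt_sn) w.
Proof.
apply: functional_extensionality => i; rewrite /fill_prefix /upd ltnS leq_eqVlt.
case: (eqVneq i (Ordinal lt_sn)) => [->|ne]; first by rewrite eqxx.
by have /negbTE-> : (i : nat) != s by apply: contraNneq ne => eq_is; apply/eqP/val_inj.
Qed.

Lemma fill_prefix_upd s (lt_sn : (s < n)%N) w y z :
  fill_prefix s w (upd y (Ordinal lt_sn) z) = upd (fill_prefix s w y) (Ordinal lt_sn) z.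
Proof.
apply: functional_extensionality => i; rewrite /fill_prefix /upd.
by case: eqP => [->|//]; rewrite /= ltnn.
Qed.

End FillPrefix.

Section KAdditiveHorner.
Context {F : fieldType} {C : comNzRingType} {n : nat} {A : ('I_n -> F) -> C}.
Hypothesis hA : k_additive A.
Context {k : nat} {Q : {poly F}}.
Hypothesis size_Q : (size Q <= k.+1)%N.

Lemma k_additive_horner_nat s : (s <= n)%N -> forall y : 'I_n -> F,
  {p : {poly C} | [/\ (size p <= (k * s).+1)%N,
     p`_(k * s) = A (fill_prefix s Q`_k y) &
     forall r : nat, A (fill_prefix s Q.[r%:R] y) = p.[r%:R]]}.
Proof.
elim: s => [|s IH] le_sn y.
  exists (A y)%:P; rewrite muln0 size_polyC leq_b1 coefC; split=> // r.
  by rewrite hornerC.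
have lt_sn : (s < n)%N := le_sn.
pose i0 := Ordinal lt_sn.
pose p (j : 'I_k.+1) := sval (IH (ltnW le_sn) (upd y i0 Q`_j)).
have pP j : [/\ (size (p j) <= (k * s).+1)%N,
    (p j)`_(k * s) = A (fill_prefix s Q`_k (upd y i0 Q`_j)) &
    forall r : nat, A (fill_prefix s Q.[r%:R] (upd y i0 Q`_j)) = (p j).[r%:R]].
  exact: (svalP (IH (ltnW le_sn) (upd y i0 Q`_j))).
exists (\sum_(j < k.+1) p j * 'X^j); split.
- apply: (leq_trans (size_sum _ _ _)); apply/bigmax_leqP => j _.
  have [size_pj _ _] := pP j; rewrite (leq_trans (size_polyMleq _ _)) // size_polyXn.
  have := ltn_ord j; rewrite mulnS; lia.
- rewrite coef_sum (bigD1 ord_max) //= big1 => [|j ne_jk].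
    rewrite addr0 coefMXn mulnS ltnNge leq_addr /= addKn.
    by have [_ -> _] := pP ord_max; rewrite fill_prefix_upd -fill_prefixS.
  have lt_jk : (j < k)%N.
    rewrite ltn_neqAle -ltnS ltn_ord andbT.
    by apply: contra ne_jk => /eqP eq_jk; apply/eqP/val_inj.
  have [size_pj _ _] := pP j; rewrite coefMXn; case: ifP => // _.
  by apply: nth_default; apply: leq_trans size_pj _; rewrite mulnS; lia.
- move=> r; rewrite fill_prefixS; set v := fill_prefix s _ y.
  rewrite (horner_coef_wide _ size_Q).
  under eq_bigr do rewrite -natrX mulr_natr.
  rewrite (additive_fun_sum (k_additive_upd hA i0 v)) horner_sum.
  apply: eq_bigr => j _; rewrite hornerM hornerXn; have [_ _ <-] := pP j.
  rewrite (additive_fun_natmul (k_additive_upd hA i0 v)) fill_prefix_upd.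
  by rewrite -natrX mulr_natr.
Qed.

End KAdditiveHorner.

Lemma horner_poly_dilate (R : comNzRingType) (p : {poly R}) m x t :
  (size p <= m)%N -> (\poly_(j < m) (p`_j * x ^+ j)).[t] = p.[t * x].
Proof.
move=> le_pm; rewrite horner_poly (horner_coef_wide _ le_pm).
by apply: eq_bigr => j _; rewrite exprMn -mulrA [x ^+ j * _]mulrC.
Qed.

Lemma poly_nat_eq (R : numDomainType) (p q : {poly R}) :
  (forall r : nat, p.[r%:R] = q.[r%:R]) -> p = q.
Proof.
move=> pq; apply/eqP; rewrite -subr_eq0; apply/eqP.
apply: (@roots_geq_poly_eq0 _ _ [seq r%:R | r <- iota 0 (size (p - q))]).
- by apply/allP => _ /mapP [r _ ->]; rewrite /root hornerD hornerN pq subrr.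
- by rewrite map_inj_uniq ?iota_uniq // => r1 r2 /eqP; rewrite eqr_nat => /eqP.
- by rewrite size_map size_iota.
Qed.

Section MpolyDilation.
Context {C : comNzRingType} {m : nat} (Q : {mpoly C[m]}) (b : 'I_m -> C).

Definition dilation_poly : {poly C} :=
  \sum_(mm <- msupp Q) (Q@_mm * \prod_i b i ^+ mm i) *: 'X^(mdeg mm).

Lemma horner_dilation_poly t : dilation_poly.[t] = Q.@[fun i => t * b i].
Proof.
rewrite mevalE horner_sum; apply: eq_bigr => mm _.
rewrite hornerZ hornerXn -mulrA; congr (_ * _).
by rewrite mdegE -prodrXr -big_split; apply: eq_bigr => i _; rewrite exprMn mulrC.
Qed.

Lemma coef_dilation_poly d : dilation_poly`_d = (pihomog mdeg d Q).@[b].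
Proof.
rewrite coef_sum pihomogE (big_morph _ (mevalD b) (meval0 b)) [RHS]big_mkcond /=.
apply: eq_bigr => mm _; rewrite coefZ coefXn eq_sym.
by case: eqP => _; rewrite ?mulr1 ?mevalZ ?mevalX // mulr0.
Qed.

End MpolyDilation.

Theorem lemma4 (R : realType) (F : fieldType) (iota : {rmorphism F -> R[i]})
  (k n : nat) (P : {poly F}) (f : F -> R[i]) :
  (2 <= k)%N -> size P = k.+1 -> P \is monic ->
  generalized_monomial n f ->
  normal_polynomial (fun x => f P.[x]) ->
  normal_polynomial (fun x => f (x ^+ k)).
Proof.
move=> _ size_P monic_P [A [hA _ hf]] [m [a [Q [ha hQ]]]].
exists m, a, (pihomog mdeg (k * n) Q); split=> // x.
pose Px := \poly_(j < k.+1) (P`_j * x ^+ j).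
have [p [_ p_top p_val]] :=
  k_additive_horner_nat hA (size_poly _ _ : (size Px <= k.+1)%N) _ (leqnn n) (fun=> 0).
have p_dilation : p = dilation_poly Q (a^~ x).
  apply: poly_nat_eq => r; rewrite -p_val fill_prefix_full -hf.
  rewrite horner_poly_dilate ?size_P // hQ horner_dilation_poly.
  congr meval; apply: functional_extensionality => i.
  by rewrite mulr_natl additive_fun_natmul // mulr_natl.
rewrite -coef_dilation_poly -p_dilation p_top fill_prefix_full coef_poly ltnSn -hf.
by move: monic_P; rewrite monicE lead_coefE size_P => /eqP ->; rewrite mul1r.
Qed.
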